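(* Let $n=rk$, let $f:\mathbb{F}_{2^n}\to\mathbb{F}_{2^k}$, let $L:\mathbb{F}_{2^n}\to\mathbb{F}_{2^n}$ be an $\mathbb{F}_{2^k}$-linear permutation of $\mathbb{F}_{2^n}$, and let $g:\mathbb{F}_{2^k}\to\mathbb{F}_{2^k}$ be a permutation. Let $i\in\{0,\dots,k-1\}$, $\gamma\in\mathbb{F}_{2^n}^*$ and $a\in\mathbb{F}_{2^k}^*$ be such that $f(x+u\gamma)+f(x)=u^{2^i}a$ for all $x\in\mathbb{F}_{2^n}$ and all $u\in\mathbb{F}_{2^k}$. Then $$\phi(x)=L(x)+L(\gamma)\left(g(f(x))+\frac{f(x)}{a}\right)^{2^{n-i}}$$ is a permutation of $\mathbb{F}_{2^n}$, and its inverse is $$\phi^{-1}(x)=L^{-1}(x)+\gamma\, a^{-2^{n-i}}\left(g^{-1}\!\left(\frac{f(L^{-1}(x))}{a}\right)+f(L^{-1}(x))\right)^{2^{n-i}}.$$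
   Context: An $\mathbb{F}_{2^k}$-linear function on $\mathbb{F}_{2^n}$ is one of the form $L(x)=\sum_{j=0}^{r-1}\lambda_j x^{2^{kj}}$ with $\lambda_j\in\mathbb{F}_{2^n}$; $L^{-1}$ and $g^{-1}$ denote compositional inverses. *)

From HB Require Import structures.
From mathcomp Require Import all_boot all_order all_algebra all_field.
Unset Printing Implicit Defensive.
Import GRing.Theory.
Local Open Scope ring_scope.

(* The subfield F_{2^k} of a field F (of characteristic 2, with k | n):
   the elements fixed by x |-> x^(2^k). *)
Definition subF (F : fieldType) (k : nat) : pred F :=
  fun x => x ^+ (2 ^ k) == x.

Definition Fk_linear (F : fieldType) (k r : nat) (L : F -> F) : Prop :=
  exists lam : 'I_r -> F, forall x, L x = \sum_(j < r) lam j * x ^+ (2 ^ (k * j)).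

From HB Require Import structures.
From mathcomp Require Import all_boot all_order all_algebra all_field.
Set Implicit Arguments.
Unset Strict Implicit.
Import GRing.Theory.
Local Open Scope ring_scope.

(* Write T(x) = g(f x) + f(x)/a and v(x) = T(x)^(2^(n-i)), an element of
   F_{2^k} with v(x)^(2^i) = T(x). By F_{2^k}-linearity phi = L o s with
   s(x) = x + v(x) gamma, and the derivative condition gives
   f(s x) = f x + T(x) a = a g(f x). Hence s x = s y forces g(f x) = g(f y),
   so f x = f y, v x = v y and x = y. Conversely f x and then v x are
   recovered from f(s x) using g^-1, which yields the inverse of s and
   therefore of phi. *)

Section CharacteristicTwo.
Variables (F : fieldType) (hchar : 2%N \in [pchar F]).

Lemma exprD_pow2 m (x y : F) : (x + y) ^+ (2 ^ m) = x ^+ (2 ^ m) + y ^+ (2 ^ m).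
Proof. by apply: exprDn_pchar; rewrite pnatX (pnatE _ (isT : prime 2)) hchar. Qed.

Lemma subF_exprM k j (u : F) : u \in subF F k -> u ^+ (2 ^ (k * j)) = u.
Proof.
move=> /eqP uK; elim: j => [|j IHj]; first by rewrite muln0 expn0 expr1.
by rewrite mulnS expnD exprM uK IHj.
Qed.

Lemma subFD k (x y : F) : x \in subF F k -> y \in subF F k -> x + y \in subF F k.
Proof. by move=> /eqP xK /eqP yK; apply/eqP; rewrite exprD_pow2 xK yK. Qed.

Lemma subFM k (x y : F) : x \in subF F k -> y \in subF F k -> x * y \in subF F k.
Proof. by move=> /eqP xK /eqP yK; apply/eqP; rewrite exprMn xK yK. Qed.

Lemma subFV k (x : F) : x \in subF F k -> x^-1 \in subF F k.
Proof. by move=> /eqP xK; apply/eqP; rewrite exprVn xK. Qed.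

Lemma subFX k m (x : F) : x \in subF F k -> x ^+ m \in subF F k.
Proof. by move=> /eqP xK; apply/eqP; rewrite exprAC xK. Qed.

Lemma Fk_linearDZ k r (L : F -> F) : Fk_linear F k r L ->
  forall x y u, u \in subF F k -> L (x + u * y) = L x + u * L y.
Proof.
move=> [lam Lsum] x y u uK; rewrite !Lsum mulr_sumr -big_split /=.
apply: eq_bigr => j _; rewrite exprD_pow2 exprMn (subF_exprM _ uK).
by rewrite mulrDr mulrCA.
Qed.

End CharacteristicTwo.

Lemma exprK_card_pow2 (F : finFieldType) n i (y : F) :
  #|F| = (2 ^ n)%N -> (i <= n)%N -> (y ^+ (2 ^ (n - i))) ^+ (2 ^ i) = y.
Proof. by move=> cardF le_in; rewrite -exprM -expnD subnK // -cardF expf_card. Qed.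

Lemma card_pow2_exp_gt0 (F : finFieldType) n : #|F| = (2 ^ n)%N -> (0 < n)%N.
Proof.
move=> cardF; have := card_finNzRing_gt1 F.
by rewrite cardF; case: n {cardF}.
Qed.

Section Shift.
Variables (F : finFieldType) (hchar : 2%N \in [pchar F]).
Variables (n k i : nat) (hcard : #|F| = (2 ^ n)%N) (le_in : (i <= n)%N).
Variables (f g : F -> F) (gamma a : F).
Hypotheses (hf : forall x, f x \in subF F k)
  (hgK : {in subF F k, forall y, g y \in subF F k})
  (haK : a \in subF F k) (ha : a != 0)
  (hdiff : forall x u, u \in subF F k ->
     f (x + u * gamma) + f x = u ^+ (2 ^ i) * a).

Definition shift x := x + (g (f x) + f x / a) ^+ (2 ^ (n - i)) * gamma.

Definition unshift (ginv : F -> F) y :=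
  y + gamma * (a ^+ (2 ^ (n - i)))^-1 * (ginv (f y / a) + f y) ^+ (2 ^ (n - i)).

Lemma shift_coef_subF x : (g (f x) + f x / a) ^+ (2 ^ (n - i)) \in subF F k.
Proof. by apply/subFX/subFD/subFM/subFV; rewrite ?hgK. Qed.

Lemma f_shift x : f (shift x) = a * g (f x).
Proof.
have := hdiff x (shift_coef_subF x); rewrite exprK_card_pow2 // => fD.
have -> : f (shift x) = (g (f x) + f x / a) * a + f x.
  by rewrite -fD -addrA addrr_pchar2 // addr0.
by rewrite mulrDl divfK // -addrA addrr_pchar2 // addr0 mulrC.
Qed.

Lemma shift_inj : {in subF F k &, injective g} -> injective shift.
Proof.
move=> ginj x y sxy.
have gfxy : g (f x) = g (f y) by apply: (mulfI ha); rewrite -!f_shift sxy.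
have fxy : f x = f y by apply: ginj; rewrite ?hf.
by move: sxy; rewrite /shift fxy => /addIr.
Qed.

Lemma shiftK ginv : {in subF F k, cancel g ginv} -> cancel shift (unshift ginv).
Proof.
move=> gK x; rewrite /unshift f_shift (mulrC a) mulfK // gK ?hf //.
have -> : f x + g (f x) * a = a * (g (f x) + f x / a).
  by rewrite mulrDr mulrCA divff // mulr1 addrC mulrC.
rewrite exprMn mulrA -(mulrA gamma) mulVf ?mulr1 ?expf_neq0 //.
by rewrite /shift -addrA (mulrC gamma) addrr_pchar2 // addr0.
Qed.

End Shift.

Theorem proposition8 (F : finFieldType) (r k : nat)
  (hchar : 2%N \in [pchar F]) (hcard : #|F| = (2 ^ (r * k))%N)
  (f : F -> F) (hf : forall x, f x \in subF F k)
  (L : F -> F) (hLlin : Fk_linear F k r L) (hLbij : bijective L)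
  (g : F -> F) (hgK : {in subF F k, forall y, g y \in subF F k})
  (hginj : {in subF F k &, injective g})
  (i : nat) (hi : (i < k)%N)
  (gamma : F) (hgamma : gamma != 0)
  (a : F) (haK : a \in subF F k) (ha : a != 0)
  (hdiff : forall x u, u \in subF F k ->
     f (x + u * gamma) + f x = u ^+ (2 ^ i) * a) :
  let n := (r * k)%N in
  let phi := fun x => L x + L gamma * (g (f x) + f x / a) ^+ (2 ^ (n - i)) in
  bijective phi /\
  (forall (Linv ginv : F -> F),
     cancel L Linv -> cancel Linv L ->
     {in subF F k, forall y, ginv y \in subF F k} ->
     {in subF F k, cancel g ginv} -> {in subF F k, cancel ginv g} ->
     let psi := fun x => Linv x + gamma * (a ^+ (2 ^ (n - i)))^-1 *
          (ginv (f (Linv x) / a) + f (Linv x)) ^+ (2 ^ (n - i)) in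
     cancel phi psi /\ cancel psi phi).
Proof.
move=> n phi.
have le_in : (i <= n)%N.
  have := card_pow2_exp_gt0 hcard; rewrite muln_gt0 => /andP[r_gt0 _].
  by rewrite (leq_trans (ltnW hi)) // leq_pmull.
have phiE : L \o shift n i f g gamma a =1 phi.
  move=> x; rewrite /= (Fk_linearDZ hchar hLlin) ?[_ * L gamma]mulrC //.
  exact: shift_coef_subF.
have phi_bij : bijective phi.
  apply: eq_bij phiE; apply: bij_comp hLbij _.
  exact/injF_bij/shift_inj.
split=> // Linv ginv LK _ _ gK _ psi.
have phiK : cancel phi psi.
  move=> x; rewrite -phiE /psi /= LK.
  exact: (shiftK hchar hcard le_in hf hgK haK ha hdiff gK).
by split; last apply/(bij_can_sym phi_bij).
Qed.
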